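(* For every $n\ge-1$, the polygraph freely generating $\mathcal O_n$ is atomic: for every $m$-generator $x$ of it and every $0\le i<m$, the supports of $[s_i(x)]$ and $[t_i(x)]$ in $\lambda(\mathcal O_n)_i$ are disjoint.
   Context: All $\omega$-categories are strict and globular; $s_i(x),t_i(x)$ are iterated $i$-sources/targets. A polygraph $S$ consists of sets $S_n$ of $n$-generators with source/target maps from $S_{n+1}$ to $n$-cells of the free $n$-category on $S_0,\dots,S_n$; $S^*$ is the free $\omega$-category. An expansion on an $\omega$-category $C$ consists of a $0$-cell $o$ and, for each $k$-cell $x$, a $(k+1)$-cell $\xi_x$ with $\xi_x:o\to x$ if $k=0$ and $\xi_x:\xi_{t(x)}\to x\star_0\xi_{s_0(x)}\star_1\cdots\star_{k-1}\xi_{s_{k-1}(x)}$ if $k>0$ (composites bracketed giving priority to lowest-dimensional composition), satisfying $\xi_{y\star_p x}=t_{p+1}(y)\star_0\xi_{s_0(x)}\star_1\cdots\star_{p-1}\xi_{s_{p-1}(x)}\star_p\xi_x\star_{p+1}\xi_y$, $\xi_{1_u}=1_{\xi_u}$, $\xi_{\xi_u}=1_{\xi_u}$, $\xi_o=1_o$. $T=UF$ is the monad induced by the forgetful functor $U$ from $\omega$-categories with expansion to $\omega\mathbf{Cat}$ and its left adjoint $F$, with unit $\eta$. For a polygraph $S$, $T(S^* )$ is freely generated by the polygraph whose $n$-generators are $\eta(a)$ ($a\in S_n$), together with the origin $o$ if $n=0$ and $\xi_{\eta(a)}$ ($a\in S_{n-1}$) if $n\ge1$. $\mathcal O_n=T^{n+1}(\emptyset)$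 ($\mathcal O_{-1}=\emptyset$), and its generating polygraph is obtained by iterating this construction $n+1$ times from the empty polygraph. For a polygraph $S$, $\lambda(S^* )_k$ is the free abelian group on $k$-cells of $S^*$ modulo $x\star_j y-x-y$; it is free abelian on the classes $[x]$ of $k$-generators; the support of an element is the set of generators with nonzero coefficient. A polygraph is atomic if for every $m$-generator $x$ and $0\le i<m$, the supports of $[s_i(x)]$ and $[t_i(x)]$ are disjoint. *)

From Stdlib Require Import ZArith List Arith.

(* Formal cells of the free omega-category on a polygraph with generators G.
   [Comp p x y] denotes x *_p y (paper convention: x *_p y is defined when
   s_p(x) = t_p(y), i.e. "y then x").  Lower-dimensional operands of a
   composite are implicitly identities (standard whiskering convention). *)
Inductive cell (G : Type) : Type :=
| Gen : G -> cell G
| Idc : cell G -> cell G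
| Comp : nat -> cell G -> cell G -> cell G.
Arguments Gen {G} _.
Arguments Idc {G} _.
Arguments Comp {G} _ _ _.

Fixpoint cmap {A B : Type} (f : A -> B) (c : cell A) : cell B :=
  match c with
  | Gen a => Gen (f a)
  | Idc u => Idc (cmap f u)
  | Comp p x y => Comp p (cmap f x) (cmap f y)
  end.

(* A polygraph: generators, their dimension, and source ([gface false]) /
   target ([gface true]) of each generator of dimension >= 1, as a cell of
   the free category on lower generators.  Generator sets carry decidable
   equality (needed to read off coefficients). *)
Record polygraph : Type := {
  gen : Type;
  gen_eq_dec : forall x y : gen, {x = y} + {x <> y};
  gdim : gen -> nat;
  gface : bool -> gen -> cell gen
}.

Section Cells.
Context {G : Type} (gd : G -> nat) (fc : bool -> G -> cell G).

Fixpoint cdim (c : cell G) : nat :=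
  match c with
  | Gen g => gd g
  | Idc u => S (cdim u)
  | Comp _ x y => Nat.max (cdim x) (cdim y)
  end.

(* (n-1)-dimensional source (b = false) / target (b = true) of c regarded
   as an n-cell (c itself if c has lower dimension, i.e. is an identity). *)
Fixpoint face (b : bool) (n : nat) (c : cell G) : cell G :=
  if cdim c <? n then c else
  match c with
  | Gen g => fc b g
  | Idc u => u
  | Comp j x y =>
      if j + 1 =? n then (if b then face b n x else face b n y)
      else Comp j (face b n x) (face b n y)
  end.

Fixpoint bndk (b : bool) (k n : nat) (c : cell G) : cell G :=
  match k with
  | 0 => c
  | S k' => bndk b k' (n - 1) (face b n c)
  end.

Definition bnd (b : bool) (i : nat) (c : cell G) : cell G :=
  bndk b (cdim c - i) (cdim c) c.

Context (eqd : forall x y : G, {x = y} + {x <> y}).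

(* coefficient of the generator g in the class [c] in lambda(S^* )_k
   (free abelian group on k-generators, x *_j y = x + y, identities = 0) *)
Fixpoint coeff (k : nat) (c : cell G) (g : G) : Z :=
  match c with
  | Gen h => if Nat.eqb (gd h) k then (if eqd h g then 1%Z else 0%Z) else 0%Z
  | Idc _ => 0%Z
  | Comp _ x y => (coeff k x g + coeff k y g)%Z
  end.

End Cells.

(* generators of the polygraph generating T(S^* ):
   Orig = o, Eta a = eta(a), Xi a = xi_{eta(a)} *)
Inductive tgen (G : Type) : Type :=
| Orig : tgen G
| Eta : G -> tgen G
| Xi : G -> tgen G.
Arguments Orig {G}.
Arguments Eta {G} _.
Arguments Xi {G} _.

Definition tgen_eq_dec {G : Type} (eqd : forall x y : G, {x = y} + {x <> y})
  (x y : tgen G) : {x = y} + {x <> y}.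
Proof. decide equality. Defined.

(* fold: ((acc *_0 f 0) *_1 f 1) ... *_(k-1) f (k-1)  (priority to lowest
   dimensional composition) *)
Definition chain {A : Type} (acc : cell A) (f : nat -> cell A) (k : nat) : cell A :=
  fold_left (fun a j => Comp j a (f j)) (seq 0 k) acc.

Section Expansion.
Context {G : Type} (gd : G -> nat) (fc : bool -> G -> cell G).

(* xi_{eta(c)} computed from the expansion axioms:
   xi_{eta a} = Xi a (generator), xi_{1_u} = 1_{xi_u},
   xi_{y *_p x} = t_{p+1}(y) *_0 xi_{s_0 x} *_1 ... *_{p-1} xi_{s_{p-1} x}
                  *_p xi_x *_{p+1} xi_y. *)
Fixpoint xi_fuel (n : nat) (c : cell G) : cell (tgen G) :=
  match n with
  | 0 => Gen Orig
  | S n' =>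
      (fix go (c : cell G) : cell (tgen G) :=
         match c with
         | Gen a => Gen (Xi a)
         | Idc u => Idc (go u)
         | Comp p y x =>
             Comp (S p)
               (Comp p
                  (chain (cmap Eta (bnd gd fc true (S p) y))
                         (fun j => xi_fuel n' (bnd gd fc false j x)) p)
                  (go x))
               (go y)
         end) c
  end.

Definition xiS (c : cell G) : cell (tgen G) := xi_fuel (S (cdim gd c)) c.

Definition Tdim (a : tgen G) : nat :=
  match a with
  | Orig => 0
  | Eta a => gd a
  | Xi a => S (gd a)
  end.

Definition Tface (b : bool) (a : tgen G) : cell (tgen G) :=
  match a with
  | Orig => Gen Orig (* a 0-generator: irrelevant *)
  | Eta a => cmap Eta (fc b a)
  | Xi a =>
      if b then
        chain (Gen (Eta a)) (fun j => xiS (bnd gd fc false j (Gen a))) (gd a)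
      else
        match gd a with
        | 0 => Gen Orig                 (* xi_{eta a} : o -> eta a *)
        | S _ => xiS (fc true a)
        end
  end.

End Expansion.

Definition Tpoly (P : polygraph) : polygraph :=
  {| gen := tgen (gen P);
     gen_eq_dec := tgen_eq_dec (gen_eq_dec P);
     gdim := Tdim (gdim P);
     gface := Tface (gdim P) (gface P) |}.

Definition empty_polygraph : polygraph :=
  {| gen := Empty_set;
     gen_eq_dec := fun x _ => match x with end;
     gdim := fun x => match x with end;
     gface := fun _ x => match x with end |}.

Definition O_polygraph (n : Z) : polygraph :=
  Nat.iter (Z.to_nat (n + 1)) Tpoly empty_polygraph.

Definition in_support (P : polygraph) (k : nat) (c : cell (gen P)) (g : gen P) : Prop :=
  coeff (gdim P) (gen_eq_dec P) k c g <> 0%Z.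

Definition src_i (P : polygraph) (i : nat) (c : cell (gen P)) : cell (gen P) :=
  bnd (gdim P) (gface P) false i c.
Definition tgt_i (P : polygraph) (i : nat) (c : cell (gen P)) : cell (gen P) :=
  bnd (gdim P) (gface P) true i c.

Definition atomic (P : polygraph) : Prop :=
  forall (x : gen P) (i : nat), i < gdim P x ->
  forall g : gen P,
    ~ (in_support P i (src_i P i (Gen x)) g /\ in_support P i (tgt_i P i (Gen x)) g).

(* Let [x] be an [m]-generator of T(S^* ).  If x = eta(a), its boundaries are
   the images of those of a, so atomicity is inherited from S.  If x = xi_a,
   the expansion axioms give, for 0 < i <= m and with eta, xi acting on
   classes generatorwise,
     [s_i(xi_a)] = xi([t_(i-1)(a)]),   [t_i(xi_a)] = eta([t_i(a)]) + xi([s_(i-1)(a)]),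
   and [s_0(xi_a)] = o, which never occurs in a target.  The eta- and
   xi-generators being distinct, the supports are disjoint as soon as those of
   [t_(i-1)(a)] and [s_(i-1)(a)] are.  Iterating from the empty polygraph gives
   the atomicity of every O_n. *)
From Stdlib Require Import ZArith Lia List.
Open Scope bool_scope.
Open Scope nat_scope.

Section Boundaries.
Context {G : Type} (gd : G -> nat) (fc : bool -> G -> cell G).

(* Cells actually built by the construction: no identities, and every
   composite along [j] has operands of dimension > [j]. *)
Fixpoint wf_cell (c : cell G) : Prop :=
  match c with
  | Gen _ => True
  | Idc _ => False
  | Comp j x y => wf_cell x /\ wf_cell y /\ S j <= cdim gd x /\ S j <= cdim gd y
  end.

Definition wf_faces : Prop :=
  forall b g, 1 <= gd g -> wf_cell (fc b g) /\ cdim gd (fc b g) = gd g - 1.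

Lemma face_unfold b n c : face gd fc b n c =
  if cdim gd c <? n then c else
  match c with
  | Gen g => fc b g
  | Idc u => u
  | Comp j x y =>
      if j + 1 =? n then (if b then face gd fc b n x else face gd fc b n y)
      else Comp j (face gd fc b n x) (face gd fc b n y)
  end.
Proof. destruct c; reflexivity. Qed.

Lemma face_low b n c : cdim gd c < n -> face gd fc b n c = c.
Proof.
  intro H. rewrite face_unfold. apply Nat.ltb_lt in H. rewrite H. reflexivity.
Qed.

Lemma face_Comp b n j x y : face gd fc b n (Comp j x y) =
  if (j + 1 =? n) && (n <=? cdim gd (Comp j x y))
  then (if b then face gd fc b n x else face gd fc b n y)
  else Comp j (face gd fc b n x) (face gd fc b n y).
Proof.
  rewrite face_unfold. destruct (cdim gd (Comp j x y) <? n) eqn:E.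
  - apply Nat.ltb_lt in E. simpl in E.
    rewrite (face_low b n x), (face_low b n y) by lia.
    replace (n <=? cdim gd (Comp j x y)) with false by (symmetry; apply Nat.leb_gt; simpl; lia).
    rewrite Bool.andb_false_r. reflexivity.
  - apply Nat.ltb_ge in E.
    replace (n <=? cdim gd (Comp j x y)) with true by (symmetry; apply Nat.leb_le; lia).
    rewrite Bool.andb_true_r. reflexivity.
Qed.

Lemma bndk_S b k n c : bndk gd fc b (S k) n c = bndk gd fc b k (n - 1) (face gd fc b n c).
Proof. reflexivity. Qed.

Lemma bndk_add b k1 : forall k2 N c,
  bndk gd fc b (k1 + k2) N c = bndk gd fc b k2 (N - k1) (bndk gd fc b k1 N c).
Proof.
  induction k1 as [|k1 IH]; intros k2 N c.
  - simpl. rewrite Nat.sub_0_r. reflexivity.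
  - simpl (S k1 + k2). rewrite !bndk_S, IH. f_equal. lia.
Qed.

Lemma bnd_low b i c : cdim gd c <= i -> bnd gd fc b i c = c.
Proof. intro H. unfold bnd. replace (cdim gd c - i) with 0 by lia. reflexivity. Qed.

Hypothesis Hfaces : wf_faces.

Lemma face_wf_cdim b c : wf_cell c -> forall n, 1 <= n -> cdim gd c <= n ->
  wf_cell (face gd fc b n c) /\ cdim gd (face gd fc b n c) = Nat.min (cdim gd c) (n - 1).
Proof.
  induction c as [g|u IH|j x IHx y IHy]; intros Wc n Hn Hd.
  - simpl in Hd. destruct (Nat.eq_dec (gd g) n) as [<-|Hne].
    + rewrite face_unfold. simpl. rewrite Nat.ltb_irrefl.
      destruct (Hfaces b g Hn) as [Wf Df]. split; [exact Wf|]. rewrite Df. simpl. lia.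
    + rewrite face_low by (simpl; lia). simpl. split; [exact I|lia].
  - destruct Wc.
  - destruct Wc as (Wx & Wy & Dx & Dy). simpl in Hd. rewrite face_Comp. simpl cdim.
    destruct (IHx Wx n Hn ltac:(lia)) as [Wx' Dx'].
    destruct (IHy Wy n Hn ltac:(lia)) as [Wy' Dy'].
    destruct (j + 1 =? n) eqn:Ejn.
    + apply Nat.eqb_eq in Ejn.
      replace (n <=? Nat.max (cdim gd x) (cdim gd y)) with true
        by (symmetry; apply Nat.leb_le; lia).
      destruct b; simpl; split; auto; lia.
    + apply Nat.eqb_neq in Ejn. simpl. rewrite Dx', Dy'. repeat split; auto; lia.
Qed.

Lemma bndk_wf_cdim b k : forall N c, wf_cell c -> cdim gd c <= N -> k <= N ->
  wf_cell (bndk gd fc b k N c) /\ cdim gd (bndk gd fc b k N c) = Nat.min (cdim gd c) (N - k).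
Proof.
  induction k as [|k IH]; intros N c Wc Hd Hk.
  - simpl. split; [exact Wc|lia].
  - rewrite bndk_S. destruct (face_wf_cdim b c Wc N ltac:(lia) Hd) as [Wf Df].
    destruct (IH (N - 1) _ Wf ltac:(lia) ltac:(lia)) as [Wb Db].
    split; [exact Wb|]. rewrite Db, Df. lia.
Qed.

Lemma bnd_wf_cdim b i c : wf_cell c ->
  wf_cell (bnd gd fc b i c) /\ cdim gd (bnd gd fc b i c) = Nat.min (cdim gd c) i.
Proof.
  intro Wc. unfold bnd.
  destruct (bndk_wf_cdim b (cdim gd c - i) (cdim gd c) c Wc (le_n _) ltac:(lia)) as [Wb Db].
  split; [exact Wb|]. rewrite Db. lia.
Qed.

Lemma bnd_face b i c N : wf_cell c -> cdim gd c = N -> i < N ->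
  bnd gd fc b i c = bnd gd fc b i (face gd fc b N c).
Proof.
  intros Wc Hd Hi. destruct (face_wf_cdim b c Wc N ltac:(lia) ltac:(lia)) as [_ Df].
  unfold bnd at 1. rewrite Hd. replace (N - i) with (S (N - 1 - i)) by lia.
  rewrite bndk_S. unfold bnd. rewrite Df, Hd.
  replace (Nat.min N (N - 1)) with (N - 1) by lia. reflexivity.
Qed.

Lemma bnd_face_le b i c N : wf_cell c -> cdim gd c <= N -> i < N ->
  bnd gd fc b i (face gd fc b N c) = bnd gd fc b i c.
Proof.
  intros Wc Hd Hi. destruct (Nat.eq_dec (cdim gd c) N).
  - symmetry. apply bnd_face; assumption.
  - rewrite face_low by lia. reflexivity.
Qed.

Lemma bndk_bnd b k : forall N c, wf_cell c -> cdim gd c <= N -> k <= N ->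
  bndk gd fc b k N c = bnd gd fc b (N - k) c.
Proof.
  induction k as [|k IH]; intros N c Wc Hd Hk.
  - simpl. rewrite bnd_low by lia. reflexivity.
  - rewrite bndk_S. destruct (face_wf_cdim b c Wc N ltac:(lia) Hd) as [Wf Df].
    rewrite IH by (try assumption; lia).
    rewrite bnd_face_le by (assumption || lia). f_equal. lia.
Qed.

Lemma bnd_bnd b i m c : wf_cell c -> i <= m ->
  bnd gd fc b i (bnd gd fc b m c) = bnd gd fc b i c.
Proof.
  intros Wc Him. destruct (le_lt_dec (cdim gd c) m) as [H|H].
  - rewrite (bnd_low b m c H). reflexivity.
  - destruct (bnd_wf_cdim b m c Wc) as [Wb Db].
    unfold bnd at 3. replace (cdim gd c - i) with ((cdim gd c - m) + (m - i)) by lia.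
    rewrite bndk_add. replace (cdim gd c - (cdim gd c - m)) with m by lia.
    fold (bnd gd fc b m c). rewrite bndk_bnd by (try assumption; lia). f_equal. lia.
Qed.

Lemma bnd_Gen b i g : i < gd g -> bnd gd fc b i (Gen g) = bnd gd fc b i (fc b g).
Proof.
  intro H. rewrite (bnd_face b i (Gen g) (gd g)) by (simpl; auto).
  rewrite face_unfold. simpl. rewrite Nat.ltb_irrefl. reflexivity.
Qed.

Lemma bnd_Comp b i j : forall D x y, cdim gd (Comp j x y) = D -> wf_cell x -> wf_cell y ->
  S j <= cdim gd x -> S j <= cdim gd y ->
  bnd gd fc b i (Comp j x y) =
  if j <? i then Comp j (bnd gd fc b i x) (bnd gd fc b i y)
  else bnd gd fc b i (if b then x else y).
Proof.
  induction D as [|D IH]; intros x y HD Wx Wy Dx Dy; simpl in HD; [lia|].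
  destruct (le_lt_dec (S D) i) as [Hi|Hi].
  - rewrite bnd_low, (bnd_low b i x), (bnd_low b i y) by (simpl; lia).
    replace (j <? i) with true by (symmetry; apply Nat.ltb_lt; lia). reflexivity.
  - rewrite (bnd_face b i _ (S D)) by (simpl; auto; lia).
    rewrite face_Comp. simpl cdim.
    destruct (j + 1 =? S D) eqn:E1.
    + apply Nat.eqb_eq in E1.
      replace (S D <=? Nat.max (cdim gd x) (cdim gd y)) with true
        by (symmetry; apply Nat.leb_le; lia).
      replace (j <? i) with false by (symmetry; apply Nat.ltb_ge; lia).
      destruct b; apply bnd_face_le; auto; lia.
    + apply Nat.eqb_neq in E1. simpl.
      destruct (face_wf_cdim b x Wx (S D) ltac:(lia) ltac:(lia)) as [Wfx Dfx].
      destruct (face_wf_cdim b y Wy (S D) ltac:(lia) ltac:(lia)) as [Wfy Dfy].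
      rewrite IH by (simpl; rewrite ?Dfx, ?Dfy; auto; lia).
      destruct b; rewrite !bnd_face_le by (assumption || lia); reflexivity.
Qed.

Lemma chain_S {A} (acc : cell A) f k : chain acc f (S k) = Comp k (chain acc f k) (f k).
Proof. unfold chain. rewrite seq_S, fold_left_app. reflexivity. Qed.

Lemma chain_wf_cdim acc f k : wf_cell acc -> k <= cdim gd acc ->
  (forall j, j < k -> wf_cell (f j) /\ cdim gd (f j) = S j) ->
  wf_cell (chain acc f k) /\ cdim gd (chain acc f k) = cdim gd acc.
Proof.
  intros Wa Hk Hf. induction k as [|k IH].
  - split; [exact Wa|reflexivity].
  - rewrite chain_S. destruct IH as [Wc Dc]; [lia|intros; apply Hf; lia|].
    destruct (Hf k ltac:(lia)) as [Wk Dk]. simpl. rewrite Dc, Dk. repeat split; auto; lia.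
Qed.

Context (eqd : forall x y : G, {x = y} + {x <> y}).

Lemma coeff_low k c g : cdim gd c < k -> coeff gd eqd k c g = 0%Z.
Proof.
  induction c as [h| |j x IHx y IHy]; simpl; intro H.
  - replace (gd h =? k) with false by (symmetry; apply Nat.eqb_neq; lia). reflexivity.
  - reflexivity.
  - rewrite IHx, IHy by lia. reflexivity.
Qed.

Lemma coeff_bnd_low b i c g : cdim gd c < i -> coeff gd eqd i (bnd gd fc b i c) g = 0%Z.
Proof. intro H. rewrite bnd_low by lia. apply coeff_low; exact H. Qed.

Lemma coeff_bnd_Comp b i j x y g : wf_cell x -> wf_cell y ->
  S j <= cdim gd x -> S j <= cdim gd y ->
  coeff gd eqd i (bnd gd fc b i (Comp j x y)) g =
  if j <? i
  then (coeff gd eqd i (bnd gd fc b i x) g + coeff gd eqd i (bnd gd fc b i y) g)%Z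
  else coeff gd eqd i (bnd gd fc b i (if b then x else y)) g.
Proof.
  intros. rewrite (bnd_Comp b i j _ x y eq_refl) by assumption.
  destruct (j <? i); reflexivity.
Qed.

Lemma coeff_tgt_chain i acc f k g : wf_cell acc -> k <= cdim gd acc ->
  (forall j, j < k -> wf_cell (f j) /\ cdim gd (f j) = S j) ->
  coeff gd eqd i (bnd gd fc true i (chain acc f k)) g =
  (coeff gd eqd i (bnd gd fc true i acc) g +
   match i with O => 0 | S i' => if (i' <? k)%nat then coeff gd eqd i (f i') g else 0 end)%Z.
Proof.
  intros Wa Hk Hf. induction k as [|k IH].
  - change (chain acc f 0) with acc. destruct i as [|i']; [lia|].
    replace (i' <? 0) with false by (symmetry; apply Nat.ltb_ge; lia). lia.
  - destruct (chain_wf_cdim acc f k Wa ltac:(lia) ltac:(intros; apply Hf; lia)) as [Wc Dc].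
    destruct (Hf k ltac:(lia)) as [Wk Dk].
    rewrite chain_S, coeff_bnd_Comp by (assumption || lia).
    rewrite IH by (lia || (intros; apply Hf; lia)).
    destruct i as [|i']; [destruct (Nat.ltb_spec k 0); lia|].
    destruct (Nat.ltb_spec k (S i')), (Nat.ltb_spec i' k), (Nat.ltb_spec i' (S k));
      try lia.
    + replace i' with k by lia. rewrite (bnd_low true (S k) (f k)) by lia. lia.
    + rewrite (coeff_bnd_low true (S i') (f k)) by lia. lia.
Qed.

End Boundaries.

Definition tgen_case {A : Type} (o : Z) (e x : A -> Z) (g : tgen A) : Z :=
  match g with Orig => o | Eta h => e h | Xi h => x h end.

Section Expansion.
Context {G : Type} (gd : G -> nat) (fc : bool -> G -> cell G)
  (eqd : forall x y : G, {x = y} + {x <> y}).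
Hypothesis Hfaces : wf_faces gd fc.

Notation Td := (Tdim gd).
Notation Tf := (Tface gd fc).
Notation Teq := (tgen_eq_dec eqd).
Notation xi := (xi_fuel gd fc).
Notation zero := (fun _ : G => 0%Z).

Lemma cdim_cmap_Eta c : cdim Td (cmap Eta c) = cdim gd c.
Proof. induction c; simpl; auto. Qed.

Lemma wf_cmap_Eta c : wf_cell Td (cmap Eta c) <-> wf_cell gd c.
Proof. induction c; simpl; try tauto. rewrite !cdim_cmap_Eta. tauto. Qed.

Lemma face_cmap_Eta b n c : face Td Tf b n (cmap Eta c) = cmap Eta (face gd fc b n c).
Proof.
  induction c as [g|u IH|j x IHx y IHy];
    rewrite face_unfold, (face_unfold gd fc), cdim_cmap_Eta;
    destruct (cdim gd _ <? n); try reflexivity.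
  simpl. rewrite IHx, IHy. destruct (j + 1 =? n), b; reflexivity.
Qed.

Lemma bndk_cmap_Eta b k : forall n c,
  bndk Td Tf b k n (cmap Eta c) = cmap Eta (bndk gd fc b k n c).
Proof. induction k; intros; simpl; [reflexivity|]. rewrite face_cmap_Eta. apply IHk. Qed.

Lemma bnd_cmap_Eta b i c : bnd Td Tf b i (cmap Eta c) = cmap Eta (bnd gd fc b i c).
Proof. unfold bnd. rewrite cdim_cmap_Eta. apply bndk_cmap_Eta. Qed.

Lemma coeff_cmap_Eta k c g :
  coeff Td Teq k (cmap Eta c) g = tgen_case 0 (coeff gd eqd k c) zero g.
Proof.
  induction c as [h| |j x IHx y IHy]; cbn [coeff cmap Tdim].
  - destruct (gd h =? k); [|destruct g; reflexivity].
    destruct (Teq (Eta h) g) as [e|e]; destruct g as [|h'|h']; simpl; try congruence;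
      destruct (eqd h h'); congruence.
  - destruct g; reflexivity.
  - rewrite IHx, IHy. destruct g; reflexivity.
Qed.

(* [t_(p+1)(y) *_0 xi_(s_0 x) *_1 ... *_(p-1) xi_(s_(p-1) x)], the first
   factor of [xi_(y *_p x)]. *)
Definition whisker n p (y x : cell G) : cell (tgen G) :=
  chain (cmap Eta (bnd gd fc true (S p) y)) (fun j => xi n (bnd gd fc false j x)) p.

Lemma xi_fuel_Comp n p y x : xi (S n) (Comp p y x) =
  Comp (S p) (Comp p (whisker n p y x) (xi (S n) x)) (xi (S n) y).
Proof. reflexivity. Qed.

Lemma whisker_wf_cdim n p y x : wf_cell gd y -> S p <= cdim gd y ->
  (forall j, j < p ->
     wf_cell Td (xi n (bnd gd fc false j x)) /\ cdim Td (xi n (bnd gd fc false j x)) = S j) ->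
  wf_cell Td (whisker n p y x) /\ cdim Td (whisker n p y x) = S p.
Proof.
  intros Wy Hy Hxi. destruct (bnd_wf_cdim gd fc Hfaces true (S p) y Wy) as [Wt Dt].
  destruct (chain_wf_cdim Td (cmap Eta (bnd gd fc true (S p) y))
              (fun j => xi n (bnd gd fc false j x)) p) as [Ww Dw].
  - apply wf_cmap_Eta; exact Wt.
  - rewrite cdim_cmap_Eta, Dt. lia.
  - exact Hxi.
  - unfold whisker. split; [exact Ww|]. rewrite Dw, cdim_cmap_Eta, Dt. lia.
Qed.

Lemma xi_wf_cdim n : forall u, wf_cell gd u -> cdim gd u < n ->
  wf_cell Td (xi n u) /\ cdim Td (xi n u) = S (cdim gd u).
Proof.
  induction n as [|n IHn]; intros u Wu Hu; [lia|].
  induction u as [g|u _|p y IHy x IHx].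
  - simpl. split; [exact I|reflexivity].
  - destruct Wu.
  - destruct Wu as (Wy & Wx & Dy & Dx). simpl in Hu. rewrite xi_fuel_Comp.
    destruct (whisker_wf_cdim n p y x Wy Dy) as [WW DW].
    { intros j Hj. destruct (bnd_wf_cdim gd fc Hfaces false j x Wx) as [Wj Dj].
      destruct (IHn _ Wj ltac:(lia)) as [Wxj Dxj]. split; [exact Wxj|]. rewrite Dxj, Dj. lia. }
    destruct (IHx Wx ltac:(lia)) as [WX DX]. destruct (IHy Wy ltac:(lia)) as [WY DY].
    cbn [wf_cell cdim]. rewrite DW, DX, DY. repeat split; auto; lia.
Qed.

Lemma xi_bnd_wf_cdim n u j : wf_cell gd u -> j < n -> j <= cdim gd u ->
  wf_cell Td (xi n (bnd gd fc false j u)) /\ cdim Td (xi n (bnd gd fc false j u)) = S j.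
Proof.
  intros Wu Hn Hu. destruct (bnd_wf_cdim gd fc Hfaces false j u Wu) as [Wj Dj].
  destruct (xi_wf_cdim n _ Wj ltac:(lia)) as [W D]. split; [exact W|]. rewrite D, Dj. lia.
Qed.

Lemma Tfaces_wf : wf_faces Td Tf.
Proof.
  intros b g Hg. destruct g as [|a|a]; simpl in Hg; [lia| |].
  - change (Tf b (Eta a)) with (cmap Eta (fc b a)). destruct (Hfaces b a Hg) as [W D].
    split; [apply wf_cmap_Eta; exact W|]. rewrite cdim_cmap_Eta, D. reflexivity.
  - destruct b.
    + change (Tf true (Xi a)) with
        (chain (Gen (Eta a)) (fun j => xiS gd fc (bnd gd fc false j (Gen a))) (gd a)).
      destruct (chain_wf_cdim Td (Gen (Eta a))
                  (fun j => xiS gd fc (bnd gd fc false j (Gen a))) (gd a)) as [W D].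
      * exact I.
      * simpl. lia.
      * intros j Hj. destruct (bnd_wf_cdim gd fc Hfaces false j (Gen a) I) as [Wj Dj].
        apply xi_bnd_wf_cdim; simpl in *; (exact I || lia).
      * split; [exact W|]. rewrite D. simpl. lia.
    + change (Tf false (Xi a)) with
        (match gd a with 0 => Gen Orig | S _ => xiS gd fc (fc true a) end).
      simpl. destruct (gd a) as [|k] eqn:E; [split; [exact I|reflexivity]|].
      destruct (Hfaces true a ltac:(lia)) as [W D].
      destruct (xi_wf_cdim _ _ W (Nat.lt_succ_diag_r _)) as [Wx Dx].
      unfold xiS. split; [exact Wx|]. rewrite Dx, D, E. lia.
Qed.

Lemma coeff_xi_top n u k g : wf_cell gd u -> cdim gd u < n -> cdim gd u <= k ->
  coeff Td Teq (S k) (xi n u) g = tgen_case 0 zero (coeff gd eqd k u) g.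
Proof.
  revert u k g. destruct n as [|n]; intros u k g Wu Hu Hk; [lia|].
  induction u as [a|u _|p y IHy x IHx].
  - cbn [xi_fuel coeff Tdim]. change (S (gd a) =? S k) with (gd a =? k).
    destruct (gd a =? k); [|destruct g; reflexivity].
    destruct (Teq (Xi a) g) as [e|e]; destruct g as [|h|h]; simpl; try congruence;
      destruct (eqd a h); congruence.
  - destruct Wu.
  - destruct Wu as (Wy & Wx & Dy & Dx). simpl in Hu, Hk.
    destruct (whisker_wf_cdim n p y x Wy Dy) as [_ DW];
      [intros j Hj; apply xi_bnd_wf_cdim; (assumption || lia)|].
    rewrite xi_fuel_Comp. cbn [coeff].
    rewrite (coeff_low Td Teq) by lia. rewrite IHx, IHy by (auto; lia).
    destruct g; cbn [tgen_case]; lia.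
Qed.

(* This is how the sources of [u] enter the targets of [xi_u]. *)
Lemma coeff_tgt_chain_Eta i c u p F g : wf_cell gd c -> p <= cdim gd c ->
  (forall j, j < p -> wf_cell Td (F j) /\ cdim Td (F j) = S j) ->
  (forall j g', j < p ->
     coeff Td Teq (S j) (F j) g' = tgen_case 0 zero (coeff gd eqd j (bnd gd fc false j u)) g') ->
  coeff Td Teq i (bnd Td Tf true i (chain (cmap Eta c) F p)) g =
  tgen_case 0 (coeff gd eqd i (bnd gd fc true i c))
    (match i with
     | 0 => zero
     | S i' => if i' <? p then coeff gd eqd i' (bnd gd fc false i' u) else zero
     end) g.
Proof.
  intros Wc Hp HF HFtop.
  rewrite (coeff_tgt_chain Td Tf Tfaces_wf Teq)
    by (rewrite ?wf_cmap_Eta, ?cdim_cmap_Eta; assumption).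
  rewrite bnd_cmap_Eta, coeff_cmap_Eta.
  destruct i as [|i']; [destruct g; cbn [tgen_case]; lia|].
  destruct (Nat.ltb_spec i' p); [rewrite HFtop by assumption|]; destruct g; cbn [tgen_case]; lia.
Qed.

Lemma coeff_tgt_whisker n p y x i g : wf_cell gd y -> wf_cell gd x -> p <= n ->
  S p <= cdim gd y -> p <= cdim gd x -> i <= S p ->
  coeff Td Teq i (bnd Td Tf true i (whisker n p y x)) g =
  tgen_case 0 (coeff gd eqd i (bnd gd fc true i y))
    (match i with
     | 0 => zero
     | S i' => if i' <? p then coeff gd eqd i' (bnd gd fc false i' x) else zero
     end) g.
Proof.
  intros Wy Wx Hp Hy Hx Hi. unfold whisker.
  destruct (bnd_wf_cdim gd fc Hfaces true (S p) y Wy) as [Wt Dt].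
  rewrite (coeff_tgt_chain_Eta i _ x).
  - rewrite bnd_bnd by assumption. reflexivity.
  - exact Wt.
  - rewrite Dt. lia.
  - intros j Hj. apply xi_bnd_wf_cdim; (assumption || lia).
  - intros j g' Hj. destruct (bnd_wf_cdim gd fc Hfaces false j x Wx) as [Wj Dj].
    apply coeff_xi_top; (assumption || lia).
Qed.

(* [xi_(y *_p x) = (whisker *_p xi_x) *_(p+1) xi_y], and above [p+1] the
   whisker is too small to contribute. *)
Lemma coeff_bnd_xi_Comp b n p y x i g : wf_cell gd y -> wf_cell gd x ->
  S p <= cdim gd y -> S p <= cdim gd x -> cdim gd (Comp p y x) <= n ->
  coeff Td Teq i (bnd Td Tf b i (xi (S n) (Comp p y x))) g =
  if S p <? i
  then (coeff Td Teq i (bnd Td Tf b i (xi (S n) x)) g +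
        coeff Td Teq i (bnd Td Tf b i (xi (S n) y)) g)%Z
  else if b
  then (coeff Td Teq i (bnd Td Tf true i (whisker n p y x)) g +
        if (p <? i)%nat then coeff Td Teq i (bnd Td Tf true i (xi (S n) x)) g else 0)%Z
  else coeff Td Teq i (bnd Td Tf false i (xi (S n) y)) g.
Proof.
  intros Wy Wx Dy Dx Hn. simpl in Hn.
  destruct (whisker_wf_cdim n p y x Wy Dy) as [WW DW];
    [intros j Hj; apply xi_bnd_wf_cdim; (assumption || lia)|].
  destruct (xi_wf_cdim (S n) x Wx ltac:(lia)) as [WX DX].
  destruct (xi_wf_cdim (S n) y Wy ltac:(lia)) as [WY DY].
  rewrite xi_fuel_Comp, (coeff_bnd_Comp Td Tf Tfaces_wf Teq)
    by (cbn [wf_cell cdim]; rewrite ?DW, ?DX, ?DY; repeat split; auto; lia).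
  destruct (Nat.ltb_spec (S p) i), b; cbn iota; try reflexivity;
    rewrite (coeff_bnd_Comp Td Tf Tfaces_wf Teq) by (rewrite ?DW, ?DX; auto; lia);
    destruct (Nat.ltb_spec p i); try lia;
    rewrite (coeff_bnd_low Td Tf Teq _ i (whisker n p y x)) by lia; lia.
Qed.


Ltac decide_ltb :=
  repeat match goal with |- context [?a <? ?b] => destruct (Nat.ltb_spec a b) end.

Lemma coeff_src_xi D : forall n u i g, cdim gd u < D -> wf_cell gd u -> cdim gd u < n ->
  coeff Td Teq i (bnd Td Tf false i (xi n u)) g =
  match i with
  | 0 => tgen_case 1 zero zero g
  | S i' => tgen_case 0 zero (coeff gd eqd i' (bnd gd fc true i' u)) g
  end.
Proof.
  induction D as [|D IHD]; intros n u i g HD Wu Hn; [lia|].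
  destruct n as [|n]; [lia|].
  revert i g. induction u as [a|u _|p y IHy x IHx]; intros i g; cbn [cdim] in *.
  - destruct (le_lt_dec (S (gd a)) i) as [Hi|Hi].
    + destruct i as [|i']; [lia|].
      rewrite bnd_low, (bnd_low gd fc true i' (Gen a)) by (cbn; lia).
      apply coeff_xi_top; cbn; (exact I || lia).
    + change (xi (S n) (Gen a)) with (Gen (Xi a) : cell (tgen G)).
      rewrite (bnd_Gen Td Tf Tfaces_wf false i (Xi a)) by (cbn; lia).
      change (Tf false (Xi a)) with
        (match gd a with 0 => Gen Orig | S _ => xiS gd fc (fc true a) end).
      destruct (gd a) as [|k] eqn:E.
      * replace i with 0 by lia. rewrite bnd_low by (cbn; lia). cbn [coeff Tdim Nat.eqb].
        destruct (Teq Orig g) as [e|e]; destruct g; simpl; congruence.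
      * destruct (Hfaces true a ltac:(lia)) as [W Df]. rewrite E in Df.
        unfold xiS. rewrite (IHD _ (fc true a)) by (assumption || lia).
        destruct i as [|i']; [reflexivity|].
        rewrite (bnd_Gen gd fc Hfaces true i' a) by lia. reflexivity.
  - destruct Wu.
  - destruct Wu as (Wy & Wx & Dy & Dx).
    rewrite coeff_bnd_xi_Comp by (auto; cbn; lia). cbn iota.
    destruct (Nat.ltb_spec (S p) i); rewrite ?IHx, ?IHy by (auto; lia);
      (destruct i as [|i']; [try lia; reflexivity|]);
      destruct g; cbn [tgen_case]; try lia;
      rewrite (coeff_bnd_Comp gd fc Hfaces eqd) by assumption; decide_ltb; lia.
Qed.

Lemma coeff_tgt_xi n : forall u, wf_cell gd u -> cdim gd u < n -> forall i g,
  coeff Td Teq i (bnd Td Tf true i (xi n u)) g =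
  tgen_case 0 (coeff gd eqd i (bnd gd fc true i u))
    (match i with 0 => zero | S i' => coeff gd eqd i' (bnd gd fc false i' u) end) g.
Proof.
  destruct n as [|n]; intros u Wu Hn; [lia|].
  induction u as [a|u _|p y IHy x IHx]; intros i g; cbn [cdim] in *.
  - destruct (le_lt_dec (S (gd a)) i) as [Hi|Hi].
    + destruct i as [|i']; [lia|].
      rewrite bnd_low, (bnd_low gd fc true (S i') (Gen a)),
        (bnd_low gd fc false i' (Gen a)) by (cbn; lia).
      rewrite (coeff_xi_top (S n) (Gen a)) by (cbn; (exact I || lia)).
      destruct g; cbn [tgen_case]; try reflexivity.
      symmetry. apply coeff_low. cbn; lia.
    + change (xi (S n) (Gen a)) with (Gen (Xi a) : cell (tgen G)).
      rewrite (bnd_Gen Td Tf Tfaces_wf true i (Xi a)) by (cbn; lia).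
      change (Tf true (Xi a)) with
        (chain (cmap Eta (Gen a)) (fun j => xiS gd fc (bnd gd fc false j (Gen a))) (gd a)).
      rewrite (coeff_tgt_chain_Eta i _ (Gen a)).
      * destruct i as [|i']; [reflexivity|].
        replace (i' <? gd a) with true by (symmetry; apply Nat.ltb_lt; lia). reflexivity.
      * exact I.
      * cbn; lia.
      * intros j Hj. destruct (bnd_wf_cdim gd fc Hfaces false j (Gen a) I) as [Wj Dj].
        apply xi_bnd_wf_cdim; cbn in *; (exact I || lia).
      * intros j g' Hj. destruct (bnd_wf_cdim gd fc Hfaces false j (Gen a) I) as [Wj Dj].
        apply coeff_xi_top; cbn in *; (assumption || lia).
  - destruct Wu.
  - destruct Wu as (Wy & Wx & Dy & Dx).
    rewrite coeff_bnd_xi_Comp by (auto; cbn; lia). cbn iota.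
    destruct (Nat.ltb_spec (S p) i).
    + rewrite IHx, IHy by (auto; lia).
      destruct i as [|i']; [lia|]. destruct g; cbn [tgen_case]; try lia;
        rewrite !(coeff_bnd_Comp gd fc Hfaces eqd) by assumption; decide_ltb; lia.
    + rewrite coeff_tgt_whisker by (auto; lia). rewrite ?IHx by (auto; lia).
      destruct i as [|i']; destruct g; cbn [tgen_case]; decide_ltb; try lia;
        rewrite !(coeff_bnd_Comp gd fc Hfaces eqd) by assumption; decide_ltb; lia.
Qed.

End Expansion.

Lemma Tpoly_atomic P : wf_faces (gdim P) (gface P) -> atomic P -> atomic (Tpoly P).
Proof.
  intros Hfaces Hatomic x i Hi g [Hs Ht].
  unfold in_support, src_i, tgt_i in *. cbn [Tpoly gen gdim gface gen_eq_dec] in *.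
  destruct x as [|a|a]; cbn [Tdim] in Hi; [lia| |].
  - change (Gen (Eta a)) with (cmap (@Eta (gen P)) (Gen a)) in Hs, Ht.
    rewrite bnd_cmap_Eta, coeff_cmap_Eta in Hs, Ht.
    destruct g as [|h|h]; cbn [tgen_case] in Hs, Ht; try congruence.
    apply (Hatomic a i Hi h). split; assumption.
  - change (Gen (Xi a)) with (xi_fuel (gdim P) (gface P) (S (gdim P a)) (Gen a)) in Hs, Ht.
    rewrite (coeff_src_xi _ _ _ Hfaces (S (S (gdim P a)))) in Hs by (cbn; auto).
    rewrite (coeff_tgt_xi _ _ _ Hfaces) in Ht by (cbn; auto).
    destruct i as [|i'], g as [|h|h]; cbn [tgen_case] in Hs, Ht; try congruence.
    apply (Hatomic a i' ltac:(lia) h). split; assumption.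
Qed.

Lemma iter_Tpoly_wf_atomic m :
  let P := Nat.iter m Tpoly empty_polygraph in wf_faces (gdim P) (gface P) /\ atomic P.
Proof.
  induction m as [|m [Hfaces Hatomic]]; cbn zeta in *.
  - split; [intros b g | intros x]; destruct g || destruct x.
  - split; [apply Tfaces_wf | apply Tpoly_atomic]; assumption.
Qed.

Theorem mainTheorem12 : forall n : Z, (-1 <= n)%Z -> atomic (O_polygraph n).
Proof.
  intros n _. apply (iter_Tpoly_wf_atomic (Z.to_nat (n + 1))).
Qed.
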